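(* There exist constants $M>0$ and $k_0>0$ such that for all $k$ on the imaginary axis $k\in i\mathbb{R}$ with $|k|>k_0$, $$\Big|\frac{y(1;k)}{y'(1;k)}\Big|<M\qquad\text{and}\qquad \Big|\frac{j_0(k\tilde n_0)}{\partial_r j_0(k\tilde n_0 r)|_{r=1}}\Big|<M.$$
   Context: Let $\epsilon_0,\gamma_0>0$ be constants and $\epsilon_1,\gamma_1:[0,1]\to(0,\infty)$ twice differentiable; $k\in\mathbb{C}$. Put $\tilde n_0=(\epsilon_0+i\gamma_0/k)^{1/2}$ and $j_0(z)=\sin z/z$. Let $y(r;k)$ be the solution of $y''+k^2(\epsilon_1(r)+i\gamma_1(r)/k)y=0$ on $[0,1]$, $y(0)=0$, $y'(0)=1$, where prime denotes $d/dr$. *)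

From Stdlib Require Import Reals.
Open Scope R_scope.

Definition Cx : Type := (R * R)%type.
Definition Re (z : Cx) : R := fst z.
Definition Im (z : Cx) : R := snd z.
Definition RtoC (x : R) : Cx := (x, 0).
Definition Ci : Cx := (0, 1).
Definition Cadd (z w : Cx) : Cx := (Re z + Re w, Im z + Im w).
Definition Copp (z : Cx) : Cx := (- Re z, - Im z).
Definition Cmul (z w : Cx) : Cx :=
  (Re z * Re w - Im z * Im w, Re z * Im w + Im z * Re w).
Definition Cinv (z : Cx) : Cx :=
  (Re z / (Re z ^ 2 + Im z ^ 2), - Im z / (Re z ^ 2 + Im z ^ 2)).
Definition Cdiv (z w : Cx) : Cx := Cmul z (Cinv w).
Definition Cmod (z : Cx) : R := sqrt (Re z ^ 2 + Im z ^ 2).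

(* principal square root (branch cut on the negative real axis, Re >= 0) *)
Definition Csqrt (z : Cx) : Cx :=
  (sqrt ((Cmod z + Re z) / 2),
   (if Rle_dec 0 (Im z) then 1 else -1) * sqrt ((Cmod z - Re z) / 2)).

Definition Csin (z : Cx) : Cx :=
  (sin (Re z) * cosh (Im z), cos (Re z) * sinh (Im z)).

Definition j0 (z : Cx) : Cx := Cdiv (Csin z) z.

Definition Cderiv_lim (f : R -> Cx) (r : R) (d : Cx) : Prop :=
  derivable_pt_lim (fun s => Re (f s)) r (Re d) /\
  derivable_pt_lim (fun s => Im (f s)) r (Im d).

Definition twice_diff_01 (f : R -> R) : Prop :=
  exists f1 f2 : R -> R, forall r, 0 <= r <= 1 ->
    derivable_pt_lim f r (f1 r) /\ derivable_pt_lim f1 r (f2 r).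

(* (y, y1) solves y'' + k^2 (eps1 + i gam1/k) y = 0 on [0,1], y(0)=0, y'(0)=1,
   with y1 = y' *)
Definition is_sol (eps1 gam1 : R -> R) (k : Cx) (y y1 : R -> Cx) : Prop :=
  y 0 = RtoC 0 /\ y1 0 = RtoC 1 /\
  forall r, 0 <= r <= 1 ->
    Cderiv_lim y r (y1 r) /\
    Cderiv_lim y1 r
      (Copp (Cmul (Cmul (Cmul k k)
                        (Cadd (RtoC (eps1 r)) (Cdiv (Cmul Ci (RtoC (gam1 r))) k)))
                  (y r))).

Definition n0t (eps0 gam0 : R) (k : Cx) : Cx :=
  Csqrt (Cadd (RtoC eps0) (Cdiv (Cmul Ci (RtoC gam0)) k)).

(* For k = i t with t real, k^2 (eps + i gam / k) = -(t^2 eps + t gam) is real,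
   so the radial equation becomes y'' = q y with q = t^2 eps1 + t gam1, and
   q >= 1 on [0,1] once |t| is large (eps1 is bounded below, gam1 above).
   For such q an energy argument controls the solution: h = Re (conj y y') has
   derivative |y'|^2 + q |y|^2 >= 0, so h >= 0, and |y'|^2 - |y|^2 has
   derivative 2 (q - 1) h >= 0 and starts at 1; hence |y(1)| < |y'(1)|.
   Likewise k tilde n_0 = i s with s real and |s| >= 2 for |t| large, and
   j_0(i s r) = sinh (s r) / (s r); the ratio j_0 / d_r j_0 at r = 1 is
   sinh s / (s cosh s - sinh s), of modulus < 1 when |s| >= 2.
   The file first proves a modulus criterion for complex quotients and the
   energy estimate, then the reduction to the imaginary axis for the ODE and
   for j_0, and finally the theorem with M = 1. *)
From Stdlib Require Import Reals Lra Psatz FunctionalExtensionality.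
Open Scope R_scope.

Lemma Cmod_Cdiv_lt_1 (z w : Cx) :
  Re z ^ 2 + Im z ^ 2 < Re w ^ 2 + Im w ^ 2 ->
  w <> RtoC 0 /\ Cmod (Cdiv z w) < 1.
Proof.
  destruct z as [a b], w as [c d]; unfold Re, Im; cbn [fst snd].
  intros Hlt; set (N := c ^ 2 + d ^ 2) in *.
  assert (HN : 0 < N) by nra.
  split.
  - intros E; injection E as -> ->; unfold N in HN; lra.
  - unfold Cmod, Cdiv, Cmul, Cinv, Re, Im; cbn [fst snd]; fold N.
    apply Rlt_le_trans with (sqrt 1); [apply sqrt_lt_1_alt | rewrite sqrt_1; lra].
    replace ((a * (c / N) - b * (- d / N)) ^ 2 + (a * (- d / N) + b * (c / N)) ^ 2)
      with ((a ^ 2 + b ^ 2) / N) by (unfold N in *; field; lra).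
    split.
    + apply Rmult_le_pos; [nra | apply Rlt_le, Rinv_0_lt_compat; lra].
    + apply Rmult_lt_reg_r with N; [lra |].
      unfold Rdiv; rewrite Rmult_assoc, Rinv_l, Rmult_1_r by lra; lra.
Qed.

Lemma nonneg_deriv_le (f f' : R -> R) (a b : R) : a <= b ->
  (forall c, a <= c <= b -> derivable_pt_lim f c (f' c)) ->
  (forall c, a <= c <= b -> 0 <= f' c) -> f a <= f b.
Proof.
  intros Hab Hd Hpos; destruct (Req_dec a b) as [->|Hne]; [lra|].
  destruct (MVT_cor2 f f' a b ltac:(lra) Hd) as [c [Hfc Hc]].
  assert (0 <= f' c) by (apply Hpos; lra); nra.
Qed.

(* Energy estimate for y'' = q y with a real coefficient q >= 1 on [0,1],
   written in real and imaginary parts y = u + i v, y' = u' + i v'. *)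
Section Energy.
Variables u v u' v' q : R -> R.
Hypothesis q_ge_1 : forall r, 0 <= r <= 1 -> 1 <= q r.
Hypothesis du : forall r, 0 <= r <= 1 -> derivable_pt_lim u r (u' r).
Hypothesis dv : forall r, 0 <= r <= 1 -> derivable_pt_lim v r (v' r).
Hypothesis du' : forall r, 0 <= r <= 1 -> derivable_pt_lim u' r (q r * u r).
Hypothesis dv' : forall r, 0 <= r <= 1 -> derivable_pt_lim v' r (q r * v r).
Hypothesis init : u 0 = 0 /\ v 0 = 0 /\ u' 0 = 1 /\ v' 0 = 0.

(* h = Re (conj y * y') has derivative |y'|^2 + q |y|^2 >= 0, so h >= 0. *)
Lemma energy_flux_nonneg r : 0 <= r <= 1 -> 0 <= u r * u' r + v r * v' r.
Proof.
  intros Hr; destruct init as [u0 [v0 _]].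
  replace 0 with (u 0 * u' 0 + v 0 * v' 0) by (rewrite u0, v0; ring).
  apply (nonneg_deriv_le (fun c => u c * u' c + v c * v' c)
    (fun c => (u' c * u' c + u c * (q c * u c)) + (v' c * v' c + v c * (q c * v c))));
    [lra| |].
  - intros c Hc; assert (Hc1 : 0 <= c <= 1) by lra.
    apply derivable_pt_lim_plus; apply derivable_pt_lim_mult; auto.
  - intros c Hc; assert (1 <= q c) by (apply q_ge_1; lra); nra.
Qed.

(* |y'|^2 - |y|^2 has derivative 2 (q - 1) h >= 0 and equals 1 at r = 0. *)
Lemma energy_at_1 : 1 + (u 1 ^ 2 + v 1 ^ 2) <= u' 1 ^ 2 + v' 1 ^ 2.
Proof.
  destruct init as [u0 [v0 [u'0 v'0]]].
  set (E := fun r => (u' r * u' r + v' r * v' r) - (u r * u r + v r * v r)).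
  enough (E 0 <= E 1) by (unfold E in *; rewrite u0, v0, u'0, v'0 in *; nra).
  apply (nonneg_deriv_le E (fun c => 2 * (q c - 1) * (u c * u' c + v c * v' c)));
    [lra| |].
  - intros c Hc; unfold E.
    replace (2 * (q c - 1) * (u c * u' c + v c * v' c)) with
      ((q c * u c * u' c + u' c * (q c * u c) + (q c * v c * v' c + v' c * (q c * v c)))
       - (u' c * u c + u c * u' c + (v' c * v c + v c * v' c))) by ring.
    apply derivable_pt_lim_minus; apply derivable_pt_lim_plus;
      apply derivable_pt_lim_mult; auto.
  - intros c Hc; assert (1 <= q c) by auto.
    pose proof (energy_flux_nonneg c Hc); nra.
Qed.
End Energy.

(* On the imaginary axis k = i t the coefficient k^2 (eps + i gam / k) equals the
   real number -(t^2 eps + t gam), so the equation reads y'' = q y with q real. *)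
Lemma axis_coefficient (t e g : R) (z : Cx) : t <> 0 ->
  Copp (Cmul (Cmul (Cmul (0, t) (0, t)) (Cadd (RtoC e) (Cdiv (Cmul Ci (RtoC g)) (0, t)))) z)
  = ((t ^ 2 * e + t * g) * Re z, (t ^ 2 * e + t * g) * Im z).
Proof.
  intros Ht; destruct z as [a b].
  unfold Copp, Cdiv, Cinv, Cmul, Cadd, RtoC, Ci, Re, Im; cbn [fst snd].
  f_equal; field; auto.
Qed.

Lemma axis_solution_ratio (eps gam : R -> R) (t : R) (y y1 : R -> Cx) : t <> 0 ->
  (forall r, 0 <= r <= 1 -> 1 <= t ^ 2 * eps r + t * gam r) ->
  is_sol eps gam (0, t) y y1 -> y1 1 <> RtoC 0 /\ Cmod (Cdiv (y 1) (y1 1)) < 1.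
Proof.
  intros Ht Hq [y0 [y10 Hd]].
  apply Cmod_Cdiv_lt_1.
  enough (1 + (Re (y 1) ^ 2 + Im (y 1) ^ 2) <= Re (y1 1) ^ 2 + Im (y1 1) ^ 2) by lra.
  apply (energy_at_1 (fun r => Re (y r)) (fun r => Im (y r))
                     (fun r => Re (y1 r)) (fun r => Im (y1 r))
                     (fun r => t ^ 2 * eps r + t * gam r)); auto.
  - intros r Hr; apply (Hd r Hr).
  - intros r Hr; apply (Hd r Hr).
  - intros r Hr; destruct (Hd r Hr) as [_ [Hre _]].
    rewrite axis_coefficient in Hre; auto.
  - intros r Hr; destruct (Hd r Hr) as [_ [_ Him]].
    rewrite axis_coefficient in Him; auto.
  - rewrite y0, y10; unfold Re, Im, RtoC; cbn [fst snd]; auto.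
Qed.

Lemma n0t_axis (e0 g0 t : R) : t <> 0 -> 0 < e0 + g0 / t ->
  n0t e0 g0 (0, t) = (sqrt (e0 + g0 / t), 0).
Proof.
  intros Ht Hc.
  assert (Hrad : Cadd (RtoC e0) (Cdiv (Cmul Ci (RtoC g0)) (0, t)) = (e0 + g0 / t, 0)).
  { unfold Cadd, Cdiv, Cinv, Cmul, RtoC, Ci, Re, Im; cbn [fst snd].
    f_equal; field; auto. }
  unfold n0t, Csqrt, Cmod; rewrite Hrad; unfold Re, Im; cbn [fst snd].
  replace ((e0 + g0 / t) ^ 2 + 0 ^ 2) with ((e0 + g0 / t) ^ 2) by ring.
  rewrite sqrt_pow2 by lra.
  replace ((e0 + g0 / t + (e0 + g0 / t)) / 2) with (e0 + g0 / t) by lra.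
  replace ((e0 + g0 / t - (e0 + g0 / t)) / 2) with 0 by lra.
  rewrite sqrt_0; f_equal; ring.
Qed.

Lemma j0_imaginary (Y : R) : j0 (0, Y) = (sinh Y / Y, 0).
Proof.
  unfold j0, Cdiv, Csin, Cmul, Cinv, Re, Im; cbn [fst snd]; rewrite sin_0, cos_0.
  destruct (Req_dec Y 0) as [->|HY].
  - rewrite sinh_0; f_equal; unfold Rdiv; ring.
  - f_equal; field; auto.
Qed.

Lemma sinhc_derivative_at_1 (s : R) : s <> 0 ->
  derivable_pt_lim (fun r => sinh (s * r) / (s * r)) 1 (cosh s - sinh s / s).
Proof.
  intros Hs.
  assert (Hlin : forall x, derivable_pt_lim (fun r => s * r) x s).
  { intros x; pose proof (derivable_pt_lim_scal id s x 1 (derivable_pt_lim_id x)) as H.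
    rewrite Rmult_1_r in H; exact H. }
  assert (Hsinh : derivable_pt_lim (fun r => sinh (s * r)) 1 (cosh (s * 1) * s)).
  { apply (derivable_pt_lim_comp (fun r => s * r) sinh);
      [apply Hlin | apply derivable_pt_lim_sinh]. }
  replace (cosh s - sinh s / s) with
    ((cosh (s * 1) * s * (s * 1) - s * sinh (s * 1)) / (s * 1)²)
    by (rewrite Rmult_1_r; unfold Rsqr; field; auto).
  apply (derivable_pt_lim_div (fun r => sinh (s * r)) (fun r => s * r)); auto; lra.
Qed.

Lemma sinh_lt_s_cosh_sub_sinh (s : R) : 4 <= s ^ 2 ->
  sinh s ^ 2 < (s * cosh s - sinh s) ^ 2.
Proof.
  intros Hs.
  assert (Hcs : Rabs (sinh s) < cosh s).
  { unfold sinh, cosh; pose proof (exp_pos s); pose proof (exp_pos (- s)).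
    apply Rabs_def1; lra. }
  apply Rabs_def2 in Hcs.
  destruct (Rle_or_lt 0 s) as [Hp|Hn].
  - assert (2 <= s) by nra.
    assert (0 < s * cosh s - 2 * sinh s) by nra; nra.
  - assert (s <= -2) by nra.
    assert (s * cosh s - 2 * sinh s < 0) by nra; nra.
Qed.

Lemma j0_axis_ratio (s : R) (d : Cx) : 4 <= s ^ 2 ->
  Cderiv_lim (fun r => j0 (Cmul (0, s) (RtoC r))) 1 d ->
  d <> RtoC 0 /\ Cmod (Cdiv (j0 (0, s)) d) < 1.
Proof.
  intros Hs [Hre Him].
  assert (Hs0 : s <> 0) by (intros ->; lra).
  assert (Hj : forall r, j0 (Cmul (0, s) (RtoC r)) = (sinh (s * r) / (s * r), 0)).
  { intros r; rewrite <- j0_imaginary; f_equal.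
    unfold Cmul, RtoC, Re, Im; cbn [fst snd]; f_equal; ring. }
  assert (Ere : (fun r => Re (j0 (Cmul (0, s) (RtoC r)))) = fun r => sinh (s * r) / (s * r))
    by (apply functional_extensionality; intros r; rewrite Hj; reflexivity).
  assert (Eim : (fun r => Im (j0 (Cmul (0, s) (RtoC r)))) = fun _ => 0)
    by (apply functional_extensionality; intros r; rewrite Hj; reflexivity).
  rewrite Ere in Hre; rewrite Eim in Him.
  destruct d as [d1 d2]; unfold Re, Im in Hre, Him; cbn [fst snd] in Hre, Him.
  rewrite (uniqueness_limite _ _ _ _ Hre (sinhc_derivative_at_1 s Hs0)).
  rewrite (uniqueness_limite _ _ _ _ Him (derivable_pt_lim_const 0 1)).
  rewrite j0_imaginary; apply Cmod_Cdiv_lt_1; unfold Re, Im; cbn [fst snd].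
  pose proof (sinh_lt_s_cosh_sub_sinh s Hs) as Hlt.
  replace (cosh s - sinh s / s) with ((s * cosh s - sinh s) / s) by (field; auto).
  unfold Rdiv; rewrite !Rpow_mult_distr.
  assert (0 < (/ s) ^ 2) by (rewrite pow_inv; apply Rinv_0_lt_compat; nra); nra.
Qed.

(* Along k = i t, |t| large, t^2 e + t g exceeds any L once e >= m > 0 and
   0 <= g <= G: indeed t^2 e + t g >= |t| (|t| m - G) >= |t| L. *)
Lemma axis_coefficient_lower (t e g m G L : R) :
  0 < m -> m <= e -> 0 <= g <= G -> 0 <= L ->
  1 <= Rabs t -> (L + G) / m <= Rabs t -> L <= t ^ 2 * e + t * g.
Proof.
  intros Hm Hme Hg HL Ht1 Htm.
  assert (HLG : L + G <= Rabs t * m).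
  { apply Rmult_le_compat_r with (r := m) in Htm; [|lra].
    unfold Rdiv in Htm; rewrite Rmult_assoc, Rinv_l, Rmult_1_r in Htm; lra. }
  assert (Htg : - (Rabs t * g) <= t * g).
  { destruct (Rle_or_lt 0 t); [rewrite Rabs_right | rewrite Rabs_left]; nra. }
  rewrite <- pow2_abs; nra.
Qed.

Lemma axis_k_n0t (eps0 gam0 t : R) : t <> 0 -> 4 <= t ^ 2 * eps0 + t * gam0 ->
  exists s, 4 <= s ^ 2 /\ Cmul (0, t) (n0t eps0 gam0 (0, t)) = (0, s).
Proof.
  intros Ht H4.
  assert (Hc : t ^ 2 * (eps0 + gam0 / t) = t ^ 2 * eps0 + t * gam0) by (field; auto).
  assert (Hc0 : 0 < eps0 + gam0 / t).
  { apply Rmult_lt_reg_l with (t ^ 2); [rewrite <- Rsqr_pow2; apply Rsqr_pos_lt; auto | lra]. }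
  exists (t * sqrt (eps0 + gam0 / t)); split.
  - rewrite Rpow_mult_distr, pow2_sqrt; lra.
  - rewrite n0t_axis by auto; unfold Cmul, Re, Im; cbn [fst snd]; f_equal; ring.
Qed.

Lemma twice_diff_01_extrema (f : R -> R) : twice_diff_01 f ->
  (exists r0, 0 <= r0 <= 1 /\ forall r, 0 <= r <= 1 -> f r0 <= f r) /\
  (exists r0, 0 <= r0 <= 1 /\ forall r, 0 <= r <= 1 -> f r <= f r0).
Proof.
  intros [f1 [f2 Hf]].
  assert (Hcont : forall c, 0 <= c <= 1 -> continuity_pt f c).
  { intros c Hc; apply derivable_continuous_pt; exists (f1 c); apply (Hf c Hc). }
  split.
  - destruct (continuity_ab_min f 0 1 ltac:(lra) Hcont) as [r0 [Hmin Hr0]]; eauto.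
  - destruct (continuity_ab_maj f 0 1 ltac:(lra) Hcont) as [r0 [Hmax Hr0]]; eauto.
Qed.

Theorem lemma2p1 (eps0 gam0 : R) (eps1 gam1 : R -> R) :
  0 < eps0 -> 0 < gam0 ->
  (forall r, 0 <= r <= 1 -> 0 < eps1 r /\ 0 < gam1 r) ->
  twice_diff_01 eps1 -> twice_diff_01 gam1 ->
  exists M k0 : R, 0 < M /\ 0 < k0 /\
    forall t : R, k0 < Rabs t ->
      let k : Cx := (0, t) in
      (forall y y1 : R -> Cx, is_sol eps1 gam1 k y y1 ->
         y1 1 <> RtoC 0 /\ Cmod (Cdiv (y 1) (y1 1)) < M) /\
      (forall d : Cx,
         Cderiv_lim (fun r => j0 (Cmul (Cmul k (n0t eps0 gam0 k)) (RtoC r))) 1 d ->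
         d <> RtoC 0 /\
         Cmod (Cdiv (j0 (Cmul k (n0t eps0 gam0 k))) d) < M).
Proof.
  intros He0 Hg0 Hpos Heps1 Hgam1.
  destruct (twice_diff_01_extrema eps1 Heps1) as [[rm [Hrm Hmin]] _].
  destruct (twice_diff_01_extrema gam1 Hgam1) as [_ [rM [HrM Hmax]]].
  set (m := eps1 rm) in *; set (G := gam1 rM) in *.
  assert (Hm : 0 < m) by apply (Hpos rm Hrm).
  assert (HG : 0 < G) by apply (Hpos rM HrM).
  assert (Hfrac1 : 0 < (1 + G) / m) by (apply Rdiv_lt_0_compat; lra).
  assert (Hfrac2 : 0 < (4 + gam0) / eps0) by (apply Rdiv_lt_0_compat; lra).
  exists 1, (1 + (1 + G) / m + (4 + gam0) / eps0); split; [lra | split; [lra |]].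
  intros t Ht k.
  assert (Ht0 : t <> 0) by (intros ->; rewrite Rabs_R0 in Ht; lra).
  split.
  - intros y y1 Hsol; apply (axis_solution_ratio eps1 gam1 t); auto.
    intros r Hr; destruct (Hpos r Hr).
    pose proof (Hmin r Hr); pose proof (Hmax r Hr).
    apply (axis_coefficient_lower t _ _ m G 1); lra.
  - intros d Hd.
    assert (H4 : 4 <= t ^ 2 * eps0 + t * gam0)
      by (apply (axis_coefficient_lower t _ _ eps0 gam0 4); lra).
    destruct (axis_k_n0t eps0 gam0 t Ht0 H4) as [s [Hs Hks]].
    unfold k in *; rewrite Hks in Hd |- *.
    exact (j0_axis_ratio s d Hs Hd).
Qed.
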